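(* Let $G=(V,E)$ be the complete undirected graph on $V$ with a self-loop at every vertex, $r:V\to\mathbb{Z}_{\geq1}$, $\hat r=r(V)-|V|+1$, and let $b$ be the function on $2^E$ with $b(F)=|V(F)|-\mathrm{comp}(F)+\hat r$ for $F\neq\emptyset$ and $b(\emptyset)=0$. Let $B=\{x\in\mathbb{Z}_{\geq0}^E: x(E)=r(V),\ (V,\mathrm{supp}(x))\text{ is connected}\}$. Then $B=B(b)\cap\mathbb{Z}_{\geq0}^E$.
   Context: $r(V)=\sum_v r(v)$, $x(F)=\sum_{e\in F}x(e)$, $\mathrm{supp}(x)=\{e:x(e)\neq0\}$. For $F\subseteq E$, $V(F)$ is the set of vertices covered by $F$ and $\mathrm{comp}(F)$ the number of connected components of $(V(F),F)$. The base polymatroid of $b$ is $B(b)=\{x\in\mathbb{R}^E: x(F)\leq b(F)\ \forall F\subseteq E,\ x(E)=b(E)\}$. *)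

From mathcomp Require Import all_boot.
Set Implicit Arguments. Unset Strict Implicit. Unset Printing Implicit Defensive.

(* The complete graph with a
   self-loop at every vertex has edge set E = all subsets e of V with
   1 <= #|e| <= 2 (a 2-set is the edge uv, a singleton {v} the loop at v). *)
Notation edge V := {e : {set V} | (0 < #|e|) && (#|e| <= 2)}.

Section Graph.
Variable V : finType.

Definition VF (F : {set edge V}) : {set V} := \bigcup_(e in F) val e.

Definition adjF (F : {set edge V}) : rel V :=
  fun u w => [exists e in F, (u \in val e) && (w \in val e)].

Definition comp (F : {set edge V}) : nat := n_comp (adjF F) (VF F).

Definition connectedF (F : {set edge V}) : Prop :=
  forall u w : V, connect (adjF F) u w.

Definition supp (x : {ffun edge V -> nat}) : {set edge V} := [set e | x e != 0].

Definition xsum (x : {ffun edge V -> nat}) (F : {set edge V}) : nat :=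
  \sum_(e in F) x e.

Definition rV (r : V -> nat) : nat := \sum_(v : V) r v.
Definition rhat (r : V -> nat) : nat := rV r - #|V| + 1.

Definition bfun (r : V -> nat) (F : {set edge V}) : nat :=
  if F == set0 then 0 else #|VF F| - comp F + rhat r.

Definition in_base (r : V -> nat) (x : {ffun edge V -> nat}) : Prop :=
  (forall F : {set edge V}, xsum x F <= bfun r F) /\ xsum x setT = bfun r setT.

Definition in_B (r : V -> nat) (x : {ffun edge V -> nat}) : Prop :=
  xsum x setT = rV r /\ connectedF (supp x).
End Graph.

From Pilot Require Import Defs.
From mathcomp Require Import all_boot.
From mathcomp Require Import zify.
Set Implicit Arguments. Unset Strict Implicit. Unset Printing Implicit Defensive.

(* Write c(F) (ncomp F) for the number of components of the spanning graph (V, F).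
   Isolated vertices are exactly the components missed by (V(F), F), so
   |V(F)| - comp(F) = |V| - c(F); as r(V) >= |V|, this gives
   b(F) = r(V) + 1 - c(F) for F nonempty, and b(E) = r(V).  Adding an edge
   lowers c by at most one, hence c(F) <= c(F u G) + |G|.
   If x is in B, take G = supp(x) \ F: then F u G is connected and
   x(E \ F) >= |G|, so x(F) <= r(V) - |G| <= r(V) + 1 - c(F) = b(F).
   Conversely, if x is in B(b) then r(V) = x(supp x) <= r(V) + 1 - c(supp x),
   so c(supp x) <= 1. *)

Section Components.
Variable V : finType.
Implicit Types (F G : {set edge V}) (g : edge V).

Lemma adjF_sym F : symmetric (adjF F).
Proof.
by move=> u w; apply/existsP/existsP => -[e /and3P[eF ue we]]; exists e; rewrite eF ue we.
Qed.

Lemma connect_sym_adjF F : connect_sym (adjF F).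
Proof. exact/sym_connect_sym/adjF_sym. Qed.

Lemma connect_adjF_sub F G u w :
  F \subset G -> connect (adjF F) u w -> connect (adjF G) u w.
Proof.
move=> sFG; move: u w; apply: connect_sub => u w /existsP[e /and3P[eF ue we]].
by apply/connect1/existsP; exists e; rewrite (subsetP sFG) // ue we.
Qed.

Lemma card_pair_edge (u w : V) : (0 < #|[set u; w]|) && (#|[set u; w]| <= 2).
Proof. by rewrite cards2; case: (u != w). Qed.

Definition pair_edge (u w : V) : edge V := exist _ [set u; w] (card_pair_edge u w).

Lemma edge_pairP g : exists u w, val g = [set u; w].
Proof.
have /andP[g_gt0 g_le2] := valP g.
have /orP[/cards1P[u ->] | /cards2P[u [w [_ ->]]]] : (#|val g| == 1) || (#|val g| == 2) by lia.
  by exists u, u; rewrite setUid.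
by exists u, w.
Qed.

Definition ncomp F : nat := n_comp (adjF F) V.

Lemma ncomp_le_card F : ncomp F <= #|V|.
Proof. exact: max_card. Qed.

Lemma ncomp_gt0 F (v : V) : 0 < ncomp F.
Proof.
apply/card_gt0P; exists (root (adjF F) v).
by rewrite inE /= andbT roots_root //; apply: connect_sym_adjF.
Qed.

Lemma connect_notin_VF F v y : v \notin VF F -> connect (adjF F) v y -> y = v.
Proof.
move=> vF /connectP[[|z p] //= /andP[/existsP[e /and3P[eF ve _]] _] _].
by case/negP: vF; apply/bigcupP; exists e.
Qed.

Lemma ncomp_VF F : ncomp F = Defs.comp F + #|~: VF F|.
Proof.
rewrite /ncomp (n_compC (mem (VF F))); congr (_ + _); apply: eq_card => v.
rewrite !inE /= andbC; case: (boolP (v \in VF F)) => //= vF.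
by apply/eqP/(connect_notin_VF vF)/connect_root.
Qed.

Lemma card_VF_sub_comp F : #|VF F| - Defs.comp F = #|V| - ncomp F.
Proof.
have comp_le : Defs.comp F <= #|VF F| by apply/subset_leq_card/subsetP => v /andP[].
by rewrite ncomp_VF -(cardsC (VF F)); lia.
Qed.

Lemma connectedF_ncomp F : connectedF F <-> ncomp F <= 1.
Proof.
have sym := connect_sym_adjF F.
split => [cF | /card_le1_eqP rootsF u w].
  apply/card_le1_eqP => s t /andP[/eqP <- _] /andP[/eqP <- _]; exact/rootP.
by apply/(rootP sym)/rootsF; rewrite unfold_in /= roots_root.
Qed.

Section AddEdge.
Variables (F : {set edge V}) (g : edge V) (u w : V).
Hypothesis g_uw : val g = [set u; w].

Let e := adjF F.
Let e' := adjF (g |: F).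
Let near z := connect e u z || connect e w z.

Lemma near_connect x y : connect e x y -> near x -> near y.
Proof.
by move=> xy /orP[ux | wx]; apply/orP; [left | right]; apply: connect_trans xy.
Qed.

Lemma connect_setU1_edge x y : connect e' x y -> connect e x y || near x && near y.
Proof.
have near_g z : z \in val g -> near z.
  by rewrite g_uw !inE => /orP[] /eqP ->; rewrite /near connect0 ?orbT.
have closed_xy : closed e' [pred z | connect e x z || near x && near z].
  apply: intro_closed; first exact: connect_sym_adjF.
  move=> y1 z1 /existsP[d /and3P[]]; rewrite !inE => /orP[/eqP -> yg zg | dF yd zd] /=.
    have ny1 := near_g _ yg; rewrite (near_g _ zg) andbT.
    case/orP => [xy | /andP[nx _]]; last by rewrite nx orbT.
    by rewrite (near_connect _ ny1) ?orbT // connect_sym_adjF.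
  have yz : connect e y1 z1 by apply/connect1/existsP; exists d; rewrite dF yd zd.
  case/orP => [xy | /andP[nx ny]]; first by rewrite (connect_trans xy yz).
  by rewrite nx (near_connect yz ny) orbT.
by move=> xy; have := closed_connect closed_xy xy; rewrite !inE connect0 => <-.
Qed.

Lemma ncomp_setU1 : ncomp F <= (ncomp (g |: F)).+1.
Proof.
have sym := connect_sym_adjF F; have sym' := connect_sym_adjF (g |: F).
have near_root r : root e r = r -> near r -> (r == root e u) || (r == root e w).
  by move=> rr /orP[] /(rootP sym) ->; rewrite rr eqxx ?orbT.
pose A := [predD1 predI (roots e) (mem V) & root e w].
have inj_root : {in A &, injective (root e')}.
  move=> r1 r2 /and3P[r1w /eqP r1r _] /and3P[r2w /eqP r2r _] /(rootP sym').
  case/connect_setU1_edge/orP => [/(rootP sym) | /andP[n1 n2]]; first by rewrite r1r r2r.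
  have := near_root r1 r1r n1; have := near_root r2 r2r n2.
  by rewrite (negPf r1w) (negPf r2w) !orbF => /eqP -> /eqP ->.
have A_le : #|A| <= ncomp (g |: F).
  rewrite -(card_in_image inj_root); apply/subset_leq_card/subsetP => _ /imageP[r _ ->].
  by rewrite unfold_in /= roots_root.
rewrite /ncomp /n_comp_mem [X in X <= _.+1](cardD1 (root e w)).
exact: leq_add (leq_b1 _) A_le.
Qed.
End AddEdge.

Lemma ncomp_setU F G : ncomp F <= ncomp (F :|: G) + #|G|.
Proof.
move: {2}#|G| (erefl #|G|) => n cardG; elim: n F G cardG => [|n IH] F G cardG.
  by move/eqP: cardG; rewrite cards_eq0 => /eqP ->; rewrite setU0 cards0 addn0.
have [g Gg] : {g | g \in G} by apply/sigW/card_gt0P; rewrite cardG.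
have cardG' : #|G :\ g| = n by move: cardG; rewrite (cardsD1 g) Gg => -[].
have -> : F :|: G = (g |: F) :|: (G :\ g) by rewrite [g |: F]setUC -setUA setD1K.
have [u [w g_uw]] := edge_pairP g.
by apply: leq_trans (ncomp_setU1 F g_uw) _; rewrite cardG addnS ltnS -cardG' IH.
Qed.

Lemma ncomp_setT : #|V| > 0 -> ncomp setT = 1.
Proof.
case/card_gt0P => v _; apply/anti_leq; rewrite ncomp_gt0 // andbT.
apply/connectedF_ncomp => u w; apply/connect1/existsP.
by exists (pair_edge u w); rewrite !inE !eqxx orbT.
Qed.

End Components.

Section Sums.
Variables (V : finType) (x : {ffun edge V -> nat}).

Lemma xsum_setTC F : xsum x setT = xsum x F + xsum x (~: F).
Proof. by rewrite /xsum (big_setID F) setTI setTD. Qed.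

Lemma xsum_supp : xsum x (supp x) = xsum x setT.
Proof.
rewrite [RHS](xsum_setTC (supp x)) /xsum [X in _ + X]big1 ?addn0 // => e.
by rewrite !inE negbK => /eqP.
Qed.

Lemma card_supp_le_xsum A : #|supp x :&: A| <= xsum x A.
Proof.
rewrite /xsum (big_setID (supp x)) setIC -sum1_card /=.
apply: leq_trans (leq_addr _ _); apply: leq_sum => e.
by rewrite !inE lt0n => /andP[].
Qed.
End Sums.

Section BasePolymatroid.
Variables (V : finType) (r : V -> nat).
Hypothesis r_gt0 : forall v, 0 < r v.

Lemma card_le_rV : #|V| <= rV r.
Proof. by rewrite -sum1_card; apply: leq_sum => v _; apply: r_gt0. Qed.

Lemma bfun_ncomp F : F != set0 -> bfun r F = (rV r).+1 - ncomp F.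
Proof.
move=> F_neq0; rewrite /bfun (negPf F_neq0) /rhat card_VF_sub_comp.
by have := ncomp_le_card F; have := card_le_rV; lia.
Qed.

Lemma bfun_setT : bfun r setT = rV r.
Proof.
have [V0 | /card_gt0P[v _]] := posnP #|V|.
  have noV (v : V) : False by move: (card0_eq V0 v); rewrite !inE.
  have -> : [set: edge V] = set0.
    by apply/setP => e; have /andP[/card_gt0P[v _] _] := valP e; case: (noV v).
  by rewrite /bfun eqxx /rV big1 // => v; case: (noV v).
have setT_neq0 : [set: edge V] != set0 by apply/set0Pn; exists (pair_edge v v).
have V_gt0 : 0 < #|V| by apply/card_gt0P; exists v.
by rewrite bfun_ncomp // ncomp_setT // subn1.
Qed.

Lemma xsum_le_bfun x F : in_B r x -> xsum x F <= bfun r F.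
Proof.
case=> x_sum supp_conn.
have [-> | F_neq0] := eqVneq F set0; first by rewrite /bfun eqxx /xsum big_set0.
have conn : connectedF (F :|: (supp x :&: ~: F)).
  move=> u w; apply: connect_adjF_sub (supp_conn u w).
  by apply/subsetP => e; rewrite !inE => ->; rewrite andTb orbN.
have := ncomp_setU F (supp x :&: ~: F); have /connectedF_ncomp := conn.
have := xsum_setTC x F; have := card_supp_le_xsum x (~: F).
rewrite bfun_ncomp // x_sum; lia.
Qed.

Lemma connectedF_supp x : in_base r x -> connectedF (supp x).
Proof.
case=> x_le; rewrite bfun_setT -xsum_supp => x_sum; apply/connectedF_ncomp.
have := card_le_rV; have [supp0 | supp_neq0] := eqVneq (supp x) set0.
  move: x_sum; rewrite supp0 /xsum big_set0; have := ncomp_le_card (set0 : {set edge V}); lia.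
by have := ncomp_le_card (supp x); have := x_le (supp x); rewrite bfun_ncomp // x_sum; lia.
Qed.
End BasePolymatroid.

Theorem mainTheorem11 (V : finType) (r : V -> nat) (hr : forall v, 0 < r v) :
  forall x : {ffun edge V -> nat}, in_B r x <-> in_base r x.
Proof.
move=> x; split => [xB | x_base].
  split => [F | ]; first exact: xsum_le_bfun.
  by case: xB => -> _; rewrite bfun_setT.
split; last exact: connectedF_supp.
by case: x_base => _ ->; rewrite bfun_setT.
Qed.
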